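(* Let $n$ be a positive integer and $G=(V,E)$ the complete graph on $n$ vertices. Let $\tau$ be a set of types, $f:\tau\to\mathbb{Q}_{\ge1}$ a fitness function, and $\alpha\in\tau$. Let $\beta^+=\arg\max\{f(\beta):\beta\in\tau\setminus\{\alpha\}\}$ and $\beta^-=\arg\min\{f(\beta):\beta\in\tau\setminus\{\alpha\}\}$, and suppose $f(\alpha)\ne f(\beta^+)$ and $f(\alpha)\ne f(\beta^-)$. Let $M_0:V\to\tau$ be a state and let $i$ be the number of vertices mapped to $\alpha$ by $M_0$. Then $$\frac{1-\left(f(\beta^+)/f(\alpha)\right)^i}{1-\left(f(\beta^+)/f(\alpha)\right)^n}\le\pi_\alpha(G,\tau,f,M_0)\le\frac{1-\left(f(\beta^-)/f(\alpha)\right)^i}{1-\left(f(\beta^-)/f(\alpha)\right)^n}.$$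
   Context: For $G=(V,E)$, $N(v)$ is the neighbourhood of $v$. For a state $S:V\to\tau$ and $v,w\in V$, $S|_{v\to w}$ equals $S$ except $w$ gets type $S(v)$. The Moran process $M(G,\tau,f,M_0)$ is the Markov chain on states started at $M_0$ in which, given $M_t$, a vertex $v$ is chosen with probability $f(M_t(v))/\sum_{u\in V}f(M_t(u))$, then $w\in N(v)$ uniformly at random, and $M_{t+1}=M_t|_{v\to w}$. $\pi_j(G,\tau,f,M_0)$ is the probability that at some time every vertex has type $j$. *)

From HB Require Import structures.
From mathcomp Require Import all_boot all_order all_algebra.
From mathcomp Require Import boolp classical_sets reals.
Set Implicit Arguments. Unset Strict Implicit. Unset Printing Implicit Defensive.
Import Order.TTheory GRing.Theory Num.Theory.
Local Open Scope ring_scope.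

Section Moran.
Variables (R : realType) (V T : finType).

Definition nbhd (G : rel V) (v : V) : {set V} := [set w | G v w].

Definition upd (S : {ffun V -> T}) (v w : V) : {ffun V -> T} :=
  [ffun u => if u == w then S v else S u].

(* one-step transition probability of the Moran process M(G,T,f,_):
   v chosen with prob. f(S v)/sum_u f(S u), then w uniform in N(v). *)
Definition moran_step (G : rel V) (f : T -> R) (S S' : {ffun V -> T}) : R :=
  \sum_(v : V) \sum_(w in nbhd G v)
     (f (S v) / \sum_(u : V) f (S u)) * (#|nbhd G v|%:R)^-1
       * (upd S v w == S')%:R.

Definition monochrome (j : T) (S : {ffun V -> T}) : bool := S == [ffun=> j].

(* probability that the chain started at S is monochromatic of type j
   at some time <= t *)
Fixpoint hit_within (G : rel V) (f : T -> R) (j : T) (t : nat)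
    (S : {ffun V -> T}) : R :=
  if monochrome j S then 1 else
  match t with
  | 0 => 0
  | t'.+1 => \sum_(S' : {ffun V -> T}) moran_step G f S S' * hit_within G f j t' S'
  end.

(* pi_j(G,T,f,M0): probability that at some time every vertex has type j
   = P(U_t {hit by time t}) = sup_t P(hit by time t) (continuity from below) *)
Definition fixation_prob (G : rel V) (f : T -> R) (j : T) (M0 : {ffun V -> T}) : R :=
  sup (range (fun t : nat => hit_within G f j t M0)).

End Moran.

Definition complete_graph (n : nat) : rel 'I_n := fun v w => v != w.
Arguments complete_graph n : clear implicits.

From HB Require Import structures.
From mathcomp Require Import all_boot all_order all_algebra.
From mathcomp Require Import boolp classical_sets reals.
From mathcomp Require Import ring zify.
Set Implicit Arguments. Unset Strict Implicit. Unset Printing Implicit Defensive.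
Import Order.TTheory GRing.Theory Num.Theory.
Local Open Scope ring_scope.

(* Let k be the number of vertices of type a.  On the complete graph a step changes k
   only along a pair of distinct vertices of which exactly one has type a: the pair
   (v, w) with S v = a raises k with weight f(a), the reverse pair (w, v) lowers it
   with weight f(S w).  Hence, for the gambler's-ruin function
   phi_r(k) = (1 + r + ... + r^(k-1)) / (1 + r + ... + r^(n-1)), the expected increment
   of phi_r(k) is a nonnegative combination of the numbers f(a) r - f(S w).  For
   r = f(b-)/f(a) they are <= 0: phi_r is a supersolution of the hitting equations and
   dominates the fixation probability.  For r = f(b+)/f(a) they are >= 0, so phi_r
   minus the fixation probability is subharmonic off the absorbing states; a maximiser
   with the most vertices of type a could still gain one, so the maximum is attained
   at an absorbing state, where the difference is <= 0.  Finally
   phi_r(k) = (1 - r^k) / (1 - r^n) when r <> 1. *)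

Section GamblersRuin.
Variables (F : fieldType) (n : nat).

Definition gambler (r : F) (k : nat) : F :=
  (\sum_(i < k) r ^+ i) / \sum_(i < n) r ^+ i.

Lemma gambler0 r : gambler r 0 = 0.
Proof. by rewrite /gambler big_ord0 mul0r. Qed.

Lemma gamblerS r k : gambler r k.+1 = gambler r k + r ^+ k / \sum_(i < n) r ^+ i.
Proof. by rewrite /gambler big_ord_recr mulrDl. Qed.

Lemma gambler_closed r k : r != 1 -> (1 - r ^+ k) / (1 - r ^+ n) = gambler r k.
Proof.
move=> r_neq1; have geom m : 1 - r ^+ m = (1 - r) * \sum_(i < m) r ^+ i.
  by rewrite -opprB subrX1 -mulNr opprB.
by rewrite !geom invfM mulrACA divff ?mul1r // subr_eq0 eq_sym.
Qed.

End GamblersRuin.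

Section GamblersRuinNonneg.
Variables (F : numFieldType) (n : nat) (r : F).
Hypothesis r_ge0 : 0 <= r.

Lemma geom_sum_gt0 : (0 < n)%N -> 0 < \sum_(i < n) r ^+ i.
Proof.
case: n => // m _; rewrite big_ord_recl expr0 ltr_wpDr //.
by apply: sumr_ge0 => i _; exact: exprn_ge0.
Qed.

Lemma gambler_ge0 k : 0 <= gambler n r k.
Proof.
by rewrite divr_ge0 ?sumr_ge0 // => i _; exact: exprn_ge0.
Qed.

Lemma le_gambler : {homo gambler n r : k l / (k <= l)%N >-> k <= l}.
Proof.
apply: homo_leq => [k|l k m|k]; [exact: le_refl | exact: le_trans |].
by rewrite gamblerS lerDl divr_ge0 ?exprn_ge0 ?sumr_ge0 // => i _; rewrite exprn_ge0.
Qed.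

Lemma gambler_max : (0 < n)%N -> gambler n r n = 1.
Proof. by move=> n_gt0; rewrite /gambler divff // gt_eqF ?geom_sum_gt0. Qed.

End GamblersRuinNonneg.

Lemma mulfV_le1 {F : numFieldType} (x : F) : x / x <= 1.
Proof. by have [->|x0] := eqVneq x 0; rewrite ?mul0r ?divff. Qed.

Section MoranChain.
Variables (R : realType) (V T : finType) (G : rel V) (f : T -> R).
Hypothesis f_gt0 : forall x, 0 < f x.

Local Notation state := {ffun V -> T}.

Definition total_fitness (S : state) : R := \sum_u f (S u).

Definition moran_rate (S : state) (v : V) : R :=
  f (S v) / total_fitness S * #|nbhd G v|%:R^-1.

Definition moran_mean (S : state) (g : state -> R) : R :=
  \sum_v \sum_(w in nbhd G v) moran_rate S v * g (upd S v w).

(* Less than 1 when some vertex has no neighbour, since then [#|nbhd G v|%:R^-1 = 0]. *)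
Definition moran_mass (S : state) : R := moran_mean S (fun _ => 1).

Lemma moran_stepE S g : \sum_S' moran_step G f S S' * g S' = moran_mean S g.
Proof.
under eq_bigr do rewrite big_distrl /=.
rewrite exchange_big; apply: eq_bigr => v _.
under eq_bigr do rewrite big_distrl /=.
rewrite exchange_big; apply: eq_bigr => w _.
rewrite (bigD1 (upd S v w)) //= eqxx mulr1 [X in _ + X]big1 ?addr0 // => S' S'_neq.
by rewrite eq_sym (negPf S'_neq) mulr0 mul0r.
Qed.

Lemma total_fitness_gt0 S : (0 < #|V|)%N -> 0 < total_fitness S.
Proof.
case/card_gt0P => v _; rewrite /total_fitness (bigD1 v) //= ltr_wpDr //.
by apply: sumr_ge0 => u _; exact/ltW.
Qed.

Lemma moran_rate_ge0 S v : 0 <= moran_rate S v.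
Proof.
rewrite /moran_rate !mulr_ge0 ?invr_ge0 ?ler0n ?sumr_ge0 //.
  exact/ltW.
by move=> u _; exact/ltW.
Qed.

Lemma moran_rate_gt0 S v w : w \in nbhd G v -> 0 < moran_rate S v.
Proof.
move=> vw; rewrite /moran_rate !mulr_gt0 ?invr_gt0 ?ltr0n ?total_fitness_gt0 //.
- by apply/card_gt0P; exists v.
- by apply/card_gt0P; exists w.
Qed.

Lemma moran_meanD S g1 g2 :
  moran_mean S (fun X => g1 X + g2 X) = moran_mean S g1 + moran_mean S g2.
Proof.
rewrite /moran_mean -big_split; apply: eq_bigr => v _; rewrite -big_split.
by apply: eq_bigr => w _; rewrite mulrDr.
Qed.

Lemma moran_meanB S g1 g2 :
  moran_mean S (fun X => g1 X - g2 X) = moran_mean S g1 - moran_mean S g2.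
Proof.
rewrite /moran_mean -sumrB; apply: eq_bigr => v _; rewrite -sumrB.
by apply: eq_bigr => w _; rewrite mulrBr.
Qed.

Lemma moran_mean_cst S c : moran_mean S (fun _ => c) = moran_mass S * c.
Proof.
rewrite /moran_mass /moran_mean big_distrl; apply: eq_bigr => v _ /=.
by rewrite big_distrl; apply: eq_bigr => w _; rewrite mulr1.
Qed.

Lemma ler_moran_mean S g1 g2 :
  (forall X, g1 X <= g2 X) -> moran_mean S g1 <= moran_mean S g2.
Proof.
move=> g12; apply: ler_sum => v _; apply: ler_sum => w _.
by rewrite ler_wpM2l ?moran_rate_ge0.
Qed.

Lemma moran_mean_ge0 S g : (forall X, 0 <= g X) -> 0 <= moran_mean S g.
Proof.
by move=> g_ge0; apply: sumr_ge0 => v _; apply: sumr_ge0 => w _;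
  rewrite mulr_ge0 ?moran_rate_ge0.
Qed.

Lemma moran_mean_ge_term S g v w : (forall X, 0 <= g X) -> w \in nbhd G v ->
  moran_rate S v * g (upd S v w) <= moran_mean S g.
Proof.
move=> g_ge0 vw; rewrite /moran_mean (bigD1 v) //= (bigD1 w) //= -addrA lerDl.
rewrite addr_ge0 ?sumr_ge0 // => [u _|u _]; first by rewrite mulr_ge0 ?moran_rate_ge0.
by apply: sumr_ge0 => x _; rewrite mulr_ge0 ?moran_rate_ge0.
Qed.

Lemma moran_massE S : moran_mass S =
  \sum_v f (S v) / total_fitness S * (#|nbhd G v|%:R / #|nbhd G v|%:R).
Proof.
apply: eq_bigr => v _; rewrite (eq_bigr (fun=> moran_rate S v)) => [|w _].
  by rewrite sumr_const -[moran_rate S v *+ _]mulr_natr /moran_rate; ring.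
by rewrite mulr1.
Qed.

Lemma moran_mass_le1 S : moran_mass S <= 1.
Proof.
rewrite moran_massE (le_trans _ (mulfV_le1 (total_fitness S))) // mulr_suml.
apply: ler_sum => v _; rewrite ler_piMr ?mulfV_le1 // divr_ge0 //; first exact/ltW.
by apply: sumr_ge0 => u _; exact/ltW.
Qed.

Lemma moran_mass_eq1 S :
  (0 < #|V|)%N -> (forall v, 0 < #|nbhd G v|)%N -> moran_mass S = 1.
Proof.
move=> V_gt0 nbhd_gt0; rewrite moran_massE.
under eq_bigr => v _ do rewrite divff ?mulr1 ?pnatr_eq0 -?lt0n ?nbhd_gt0 //.
by rewrite -mulr_suml divff // gt_eqF ?total_fitness_gt0.
Qed.

Lemma moran_maximum_principle (D : state -> R) (rank : state -> nat) :
  (forall S, 0 < D S -> D S <= moran_mean S D /\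
     exists v w, w \in nbhd G v /\ (rank S < rank (upd S v w))%N) ->
  forall S, D S <= 0.
Proof.
move=> subharmonic S0.
have [Smax _ Dmax] := @arg_maxP _ _ _ S0 xpredT D isT.
have [S1 /eqP DS1 rank_max] :=
  @arg_maxnP _ Smax (fun S => D S == D Smax) rank (eqxx _).
apply: le_trans (Dmax S0 isT) _; rewrite -DS1 leNgt; apply/negP => DS1_gt0.
have [DS1_le [v [w [vw rank_lt]]]] := subharmonic S1 DS1_gt0.
have term_le0 : moran_rate S1 v * (D S1 - D (upd S1 v w)) <= 0.
  apply: le_trans (moran_mean_ge_term S1 (g := fun X => D S1 - D X) _ vw) _.
    by move=> X; rewrite subr_ge0 DS1; exact: Dmax.
  rewrite moran_meanB moran_mean_cst subr_le0 (le_trans _ DS1_le) //.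
  by rewrite ler_piMl ?moran_mass_le1 // ltW.
have D_upd : D (upd S1 v w) == D Smax.
  rewrite eq_le; apply/andP; split; first exact: Dmax.
  by rewrite -DS1 -subr_le0 -(pmulr_rle0 _ (moran_rate_gt0 S1 vw)).
by have /= := rank_max _ D_upd; rewrite leqNgt rank_lt.
Qed.

Variable a : T.

Local Notation hit t := (hit_within G f a t).
Local Notation fix_prob := (fixation_prob G f a).

Lemma hit_withinS t S :
  hit t.+1 S = if monochrome a S then 1 else moran_mean S (hit t).
Proof. by rewrite /= moran_stepE. Qed.

Lemma hit_within_ge0 t S : 0 <= hit t S.
Proof.
elim: t S => [|t IH] S; first by rewrite /=; case: ifP.
by rewrite hit_withinS; case: ifP => // _; exact: moran_mean_ge0.
Qed.

Lemma hit_within_le1 t S : hit t S <= 1.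
Proof.
elim: t S => [|t IH] S; first by rewrite /=; case: ifP.
rewrite hit_withinS; case: ifP => // _.
rewrite (le_trans (ler_moran_mean S (g2 := fun=> 1) IH)) //.
by rewrite moran_mean_cst mulr1 moran_mass_le1.
Qed.

Lemma hit_within_monotone S :
  {homo (fun t => hit t S) : t t' / (t <= t')%N >-> t <= t'}.
Proof.
apply: homo_leq => [x|y x z|t]; [exact: le_refl | exact: le_trans |].
elim: t S => [|t IH] S; rewrite [hit _.+1 S]hit_withinS.
  by rewrite /=; case: ifP => // _; exact: moran_mean_ge0 (hit_within_ge0 0).
by rewrite hit_withinS; case: ifP => // _; exact: ler_moran_mean.
Qed.

Lemma hit_within_has_sup S : has_sup (range (fun t => hit t S)).
Proof.
split; first by exists (hit 0 S), 0%N.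
by exists 1 => _ [t _ <-]; exact: hit_within_le1.
Qed.

Lemma hit_within_le_fixation t S : hit t S <= fix_prob S.
Proof. by apply: (sup_upper_bound (hit_within_has_sup S)); exists t. Qed.

Lemma fixation_prob_ge0 S : 0 <= fix_prob S.
Proof. exact: le_trans (hit_within_ge0 0 S) (hit_within_le_fixation 0 S). Qed.

Lemma hit_within_uniform eps :
  0 < eps -> exists t, forall S, fix_prob S - eps <= hit t S.
Proof.
move=> eps_gt0.
have /choice[tS tS_close] : forall S, exists t, fix_prob S - eps < hit t S.
  by move=> S; have [_ [t _ <-]] := sup_adherent eps_gt0 (hit_within_has_sup S); exists t.
exists (\max_S tS S)%N => S; apply: le_trans (ltW (tS_close S)) _.
exact/hit_within_monotone/leq_bigmax.
Qed.

Lemma fixation_prob_superharmonic S :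
  ~~ monochrome a S -> moran_mean S fix_prob <= fix_prob S.
Proof.
move=> S_mixed; apply/ler_addgt0Pr => eps eps_gt0.
have [t fix_le_hit] := hit_within_uniform eps_gt0.
apply: le_trans (_ : moran_mean S (fun X => hit t X + eps) <= _).
  by apply: ler_moran_mean => X; rewrite -lerBlDr.
rewrite moran_meanD moran_mean_cst lerD //.
  by apply: le_trans (hit_within_le_fixation t.+1 S); rewrite hit_withinS (negPf S_mixed).
by rewrite ler_piMl ?moran_mass_le1 // ltW.
Qed.

Lemma fixation_prob_le_supersolution (phi : state -> R) :
  (forall S, 0 <= phi S) -> (forall S, monochrome a S -> 1 <= phi S) ->
  (forall S, ~~ monochrome a S -> moran_mean S phi <= phi S) ->
  forall S, fix_prob S <= phi S.
Proof.
move=> phi_ge0 phi_mono phi_super S.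
have hit_le t : forall S, hit t S <= phi S.
  elim: t => [|t IH] {}S; first by rewrite /=; case: ifP => [/phi_mono|].
  rewrite hit_withinS; case: ifP => [/phi_mono //|/negbT S_mixed].
  exact: le_trans (ler_moran_mean S IH) (phi_super S S_mixed).
by apply: ge_sup; [exists (hit 0 S), 0%N | move=> _ [t _ <-]].
Qed.

End MoranChain.

Section CompleteGraph.
Variables (R : realType) (n : nat) (T : finType) (f : T -> R) (a : T).
Hypotheses (n_gt0 : (0 < n)%N) (f_gt0 : forall x, 0 < f x).

Local Notation K := (complete_graph n).
Local Notation state := {ffun 'I_n -> T}.

Lemma in_nbhd_complete v w : (w \in nbhd K v) = (v != w).
Proof. by rewrite inE. Qed.

Lemma card_nbhd_complete v : #|nbhd K v| = n.-1.
Proof.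
have -> : nbhd K v = [set~ v] by apply/setP => w; rewrite !inE eq_sym.
by rewrite cardsC1 card_ord.
Qed.

Lemma sum_complete_edgesC (X : 'I_n -> 'I_n -> R) :
  \sum_v \sum_(w in nbhd K v) X v w = \sum_v \sum_(w in nbhd K v) X w v.
Proof.
under eq_bigr do rewrite big_mkcond.
rewrite exchange_big; apply: eq_bigr => w _; rewrite [RHS]big_mkcond.
by apply: eq_bigr => v _; rewrite !in_nbhd_complete eq_sym.
Qed.

Definition mutants (S : state) : nat := #|[set v | S v == a]|.

Lemma mutants_upd S v w :
  (mutants (upd S v w) + (S w == a) = mutants S + (S v == a))%N.
Proof.
rewrite /mutants (cardsD1 w [set u | upd S v w u == a]) (cardsD1 w [set u | S u == a]).
have -> : [set u | upd S v w u == a] :\ w = [set u | S u == a] :\ w.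
  by apply/setP => u; rewrite !inE ffunE; case: eqP.
by rewrite !inE ffunE eqxx; case: (S v == a); case: (S w == a) => /=; lia.
Qed.

Lemma monochrome_mutants S : monochrome a S = (mutants S == n).
Proof.
have -> : (mutants S == n) = ([set v | S v == a] == [set: 'I_n]).
  have := max_card [set v | S v == a]; rewrite card_ord => mutants_le.
  by rewrite eqEcard finset.subsetT cardsT card_ord eqn_leq mutants_le.
apply/eqP/eqP => [-> | /setP all_mutants].
  by apply/setP => v; rewrite !inE ffunE eqxx.
by apply/ffunP => v; have := all_mutants v; rewrite !inE ffunE => /eqP.
Qed.

Definition mutant_drift (S : state) (g : nat -> R) : R :=
  \sum_v \sum_(w in nbhd K v) f (S v) * (g (mutants (upd S v w)) - g (mutants S)).

Lemma moran_mean_mutants S g :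
  moran_mean K f S (fun X => g (mutants X)) =
  moran_mass K f S * g (mutants S) + (total_fitness f S * n.-1%:R)^-1 * mutant_drift S g.
Proof.
rewrite -moran_mean_cst -[LHS](subrK (moran_mean K f S (fun=> g (mutants S)))).
rewrite -moran_meanB addrC; congr (_ + _).
rewrite /moran_mean /mutant_drift big_distrr; apply: eq_bigr => v _ /=.
rewrite big_distrr; apply: eq_bigr => w _ /=.
rewrite /moran_rate card_nbhd_complete invfM; ring.
Qed.

Lemma mutant_drift_pairs S g : let k := mutants S in
  mutant_drift S g = \sum_v \sum_(w in nbhd K v) ((S v == a) && (S w != a))%:R *
    (f a * (g k.+1 - g k) + f (S w) * (g k.-1 - g k)).
Proof.
move=> k; pose t v w : R := ((S v == a) && (S w != a))%:R.
transitivity (\sum_v \sum_(w in nbhd K v)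
    (t v w * (f a * (g k.+1 - g k)) + t w v * (f (S v) * (g k.-1 - g k)))).
  apply: eq_bigr => v _; apply: eq_bigr => w _; rewrite /t.
  have := mutants_upd S v w; rewrite -/k.
  case: (boolP (S v == a)) => [/eqP Sv|_]; case: (boolP (S w == a)) => _ /= upd_k.
  - by rewrite (_ : mutants _ = k) ?subrr ?mulr0 ?mul0r ?addr0 //; lia.
  - by rewrite (_ : mutants _ = k.+1) ?Sv ?mul1r ?mul0r ?addr0 //; lia.
  - by rewrite (_ : mutants _ = k.-1) ?mul1r ?mul0r ?add0r //; lia.
  - by rewrite (_ : mutants _ = k) ?subrr ?mulr0 ?mul0r ?addr0 //; lia.
under eq_bigr do rewrite big_split /=.
rewrite big_split /= (sum_complete_edgesC (fun v w => t w v * _)) -big_split /=.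
by apply: eq_bigr => v _; rewrite -big_split; apply: eq_bigr => w _; rewrite /= -mulrDr.
Qed.

Lemma mutant_drift_gambler S r : let k := mutants S in
  mutant_drift S (gambler n r) = \sum_v \sum_(w in nbhd K v)
    ((S v == a) && (S w != a))%:R *
    ((gambler n r k - gambler n r k.-1) * (f a * r - f (S w))).
Proof.
rewrite /= mutant_drift_pairs; apply: eq_bigr => v _; apply: eq_bigr => w _.
case: (boolP (S v == a)) => [Sv|_]; last by rewrite !mul0r.
have : (0 < mutants S)%N by apply/card_gt0P; exists v; rewrite inE.
by case: (mutants S) => // k _; rewrite /= !gamblerS exprS; ring.
Qed.

Lemma drift_weight_ge0 (S : state) : 0 <= (total_fitness f S * n.-1%:R)^-1.
Proof. by rewrite invr_ge0 mulr_ge0 ?ler0n // ltW ?total_fitness_gt0 ?card_ord. Qed.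

Section GamblerHarmonic.
Variables (r : R) (S : state).
Hypothesis r_ge0 : 0 <= r.

Lemma gambler_superharmonic : (forall b, b != a -> f a * r <= f b) ->
  moran_mean K f S (fun X => gambler n r (mutants X)) <= gambler n r (mutants S).
Proof.
move=> r_le; rewrite moran_mean_mutants -[leRHS]addr0 lerD //.
  by rewrite ler_piMl ?gambler_ge0 ?moran_mass_le1.
rewrite mulr_ge0_le0 ?drift_weight_ge0 // mutant_drift_gambler.
apply: sumr_le0 => v _; apply: sumr_le0 => w _.
case: (boolP (S w != a)) => [Sw|_]; rewrite ?andbF ?mul0r // andbT.
rewrite mulr_ge0_le0 ?ler0n // mulr_ge0_le0 ?subr_ge0 ?le_gambler ?leq_pred //.
by rewrite subr_le0 r_le.
Qed.

Lemma gambler_subharmonic : (1 < n)%N -> (forall b, b != a -> f b <= f a * r) ->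
  gambler n r (mutants S) <= moran_mean K f S (fun X => gambler n r (mutants X)).
Proof.
move=> n_gt1 r_ge; rewrite moran_mean_mutants moran_mass_eq1 ?card_ord //; last first.
  by move=> v; rewrite card_nbhd_complete -ltnS prednK.
rewrite mul1r lerDl mulr_ge0 ?drift_weight_ge0 // mutant_drift_gambler.
apply: sumr_ge0 => v _; apply: sumr_ge0 => w _.
case: (boolP (S w != a)) => [Sw|_]; rewrite ?andbF ?mul0r // andbT.
by rewrite mulr_ge0 ?ler0n // mulr_ge0 ?subr_ge0 ?le_gambler ?leq_pred ?r_ge.
Qed.

End GamblerHarmonic.

Lemma fixation_prob_le_gambler r : 0 <= r -> (forall b, b != a -> f a * r <= f b) ->
  forall S, fixation_prob K f a S <= gambler n r (mutants S).
Proof.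
move=> r_ge0 r_le; apply: fixation_prob_le_supersolution => // [S|S|S _].
- exact: gambler_ge0.
- by rewrite monochrome_mutants => /eqP ->; rewrite gambler_max.
- exact: gambler_superharmonic.
Qed.

Lemma gambler_le_fixation_prob r : 0 <= r -> (forall b, b != a -> f b <= f a * r) ->
  forall S, gambler n r (mutants S) <= fixation_prob K f a S.
Proof.
move=> r_ge0 r_ge S; rewrite -subr_le0; move: S.
apply: (moran_maximum_principle (G := K) f_gt0
  (D := fun S => gambler n r (mutants S) - fixation_prob K f a S) (rank := mutants)).
move=> S D_gt0.
have /card_gt0P[v] : (0 < mutants S)%N.
  rewrite lt0n; apply: contraTneq D_gt0 => /= ->.
  by rewrite gambler0 sub0r oppr_gt0 -leNgt fixation_prob_ge0.
rewrite inE => Sv.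
have S_mixed : ~~ monochrome a S.
  apply: contraTN D_gt0 => S_mono; rewrite -leNgt subr_le0.
  move: (S_mono); rewrite monochrome_mutants => /eqP ->; rewrite gambler_max //.
  by apply: le_trans (hit_within_le_fixation _ f_gt0 _ 0 S); rewrite /= S_mono.
have [w Sw] : exists w, S w != a.
  apply/existsP; apply: contraR S_mixed; rewrite negb_exists => /forallP all_a.
  by apply/eqP/ffunP => u; rewrite ffunE; exact/eqP/negPn.
have vw : v != w by apply: contraNneq Sw => <-.
split; last first.
  exists v, w; split; first by rewrite inE.
  by have := mutants_upd S v w; rewrite Sv (negPf Sw) /=; lia.
rewrite moran_meanB lerB ?fixation_prob_superharmonic // gambler_subharmonic //.
by have := max_card [set v; w]; rewrite cards2 vw card_ord.
Qed.

End CompleteGraph.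

Theorem lemma22 (R : realType) (n : nat) (T : finType) (f : T -> rat)
    (a bp bm : T) (M0 : {ffun 'I_n -> T}) :
  (0 < n)%N ->
  (forall x : T, 1 <= f x) ->
  bp != a -> (forall b : T, b != a -> f b <= f bp) ->
  bm != a -> (forall b : T, b != a -> f bm <= f b) ->
  f a != f bp -> f a != f bm ->
  let i := #|[set v | M0 v == a]| in
  let rp : R := ratr (f bp / f a) in
  let rm : R := ratr (f bm / f a) in
  (1 - rp ^+ i) / (1 - rp ^+ n)
    <= fixation_prob (complete_graph n) (fun x => (ratr (f x) : R)) a M0
    <= (1 - rm ^+ i) / (1 - rm ^+ n).
Proof.
move=> n_gt0 f_ge1 _ max_bp _ min_bm a_neq_bp a_neq_bm /=.
have f_gt0 x : 0 < f x by apply: lt_le_trans (f_ge1 x).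
have F_gt0 x : 0 < ratr (f x) :> R by rewrite ltr0q.
have ratio_ge0 b : 0 <= ratr (f b / f a) :> R by rewrite ler0q divr_ge0 ?ltW.
have ratio_neq1 b : f a != f b -> ratr (f b / f a) != 1 :> R.
  move=> ab; rewrite fmorph_eq1; apply: contra ab => /eqP ratio1.
  by rewrite -[f b](divfK (lt0r_neq0 (f_gt0 a))) ratio1 mul1r.
have scaledE b : ratr (f a) * ratr (f b / f a) = ratr (f b) :> R.
  by rewrite -rmorphM mulrC divfK ?lt0r_neq0.
rewrite !gambler_closed ?ratio_neq1 //; apply/andP; split.
- apply: gambler_le_fixation_prob => // c ca; rewrite scaledE ler_rat; exact: max_bp.
- apply: fixation_prob_le_gambler => // c ca; rewrite scaledE ler_rat; exact: min_bm.
Qed.
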